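(* The intuitionistic modal logic $\mathsf{KM}\oplus\mathsf{LC}$ is exactly the set of formulas valid in the Kripke frame $(\omega,\ge,>)$, i.e. with worlds the natural numbers, intuitionistic order $m\unlhd n$ iff $m\ge n$, and modal accessibility $m\prec n$ iff $m>n$.
   Context: Formulas are built from variables, $\bot,\to,\wedge,\vee,\Box$. In a frame $(W,\unlhd,\prec)$, valuations assign $\unlhd$-upward closed sets to variables, connectives are interpreted in the Heyting algebra of upsets, and $\Box A=\{w\mid\forall x(w\prec x\Rightarrow x\in A)\}$; validity means denoting $W$ under every valuation. $\mathsf{KM}\oplus\mathsf{LC}$ is the smallest set of formulas containing all axioms of intuitionistic propositional logic, $\Box(A\to B)\to(\Box A\to\Box B)$, $(\Box A\to A)\to A$, $\Box A\to((B\to A)\vee B)$ and $(A\to B)\vee(B\to A)$, closed under modus ponens, necessitation and substitution. *)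

From Stdlib Require Import Arith.

Inductive form : Type :=
| Var : nat -> form
| Bot : form
| Imp : form -> form -> form
| And : form -> form -> form
| Or  : form -> form -> form
| Box : form -> form.

Fixpoint subst (s : nat -> form) (A : form) : form :=
  match A with
  | Var p => s p
  | Bot => Bot
  | Imp B C => Imp (subst s B) (subst s C)
  | And B C => And (subst s B) (subst s C)
  | Or B C => Or (subst s B) (subst s C)
  | Box B => Box (subst s B)
  end.

Inductive ipc_axiom : form -> Prop :=
| ax_K  A B : ipc_axiom (Imp A (Imp B A))
| ax_S  A B C : ipc_axiom (Imp (Imp A (Imp B C)) (Imp (Imp A B) (Imp A C)))
| ax_andE1 A B : ipc_axiom (Imp (And A B) A)
| ax_andE2 A B : ipc_axiom (Imp (And A B) B)
| ax_andI A B : ipc_axiom (Imp A (Imp B (And A B)))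
| ax_orI1 A B : ipc_axiom (Imp A (Or A B))
| ax_orI2 A B : ipc_axiom (Imp B (Or A B))
| ax_orE A B C : ipc_axiom (Imp (Imp A C) (Imp (Imp B C) (Imp (Or A B) C)))
| ax_efq A : ipc_axiom (Imp Bot A).

Inductive KMLC : form -> Prop :=
| kmlc_ipc A : ipc_axiom A -> KMLC A
| kmlc_K A B : KMLC (Imp (Box (Imp A B)) (Imp (Box A) (Box B)))
| kmlc_Lob A : KMLC (Imp (Imp (Box A) A) A)
| kmlc_KM A B : KMLC (Imp (Box A) (Or (Imp B A) B))
| kmlc_LC A B : KMLC (Or (Imp A B) (Imp B A))
| kmlc_mp A B : KMLC (Imp A B) -> KMLC A -> KMLC B
| kmlc_nec A : KMLC A -> KMLC (Box A)
| kmlc_subst (s : nat -> form) A : KMLC A -> KMLC (subst s A).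

Definition upset_val (V : nat -> nat -> Prop) : Prop :=
  forall p w x, x <= w -> V p w -> V p x.

Fixpoint forces (V : nat -> nat -> Prop) (w : nat) (A : form) : Prop :=
  match A with
  | Var p => V p w
  | Bot => False
  | Imp B C => forall x, x <= w -> forces V x B -> forces V x C
  | And B C => forces V w B /\ forces V w C
  | Or B C => forces V w B \/ forces V w C
  | Box B => forall x, x < w -> forces V x B
  end.

Definition omega_valid (A : form) : Prop :=
  forall V, upset_val V -> forall w, forces V w A.

From Stdlib Require Import Arith Lia List Classical ClassicalEpsilon.
Import ListNotations.

(* Soundness is a direct check on the frame: Löb's axiom holds because [>] is
   well-founded, and KM and LC hold because [>=] is linear with [>] as its
   strict part.

   For completeness, suppose [A] is not a theorem.  By LC, the empty context
   extends to a finite context [G] that still does not prove [A] but in which,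
   for all subformulas [B], [C] of [A], one of [B -> C], [C -> B] is derivable,
   and so is one of [(B -> C) -> B], [B -> (B -> C)].  Then provable
   implication under [G] totally preorders the subformulas of [A]; let [rk B]
   be the number of classes strictly below [B] and [top] the rank of a
   provable formula.  Totality makes [rk] the minimum on conjunctions and the
   maximum on disjunctions, and gives [rk (B -> C) = rk C < rk B] unless [B]
   entails [C] (Goedel-Dummett).  KM makes [Box B] entail every subformula not
   entailing [B], and Löb's axiom makes [Box B] strictly above [B] when [G]
   does not prove [B], so [rk (Box B) = rk B + 1].  Hence the valuation
   [p |-> {w | w < rk p}] forces a subformula [B] at a world [w < top] exactly
   when [w < rk B], and [A] fails at the world [rk A < top]. *)

Lemma kmlc_imp_refl A : KMLC (Imp A A).
Proof.
  pose proof (kmlc_ipc _ (ax_S A (Imp A A) A)) as HS.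
  pose proof (kmlc_ipc _ (ax_K A (Imp A A))) as HK1.
  pose proof (kmlc_ipc _ (ax_K A A)) as HK2.
  exact (kmlc_mp _ _ (kmlc_mp _ _ HS HK1) HK2).
Qed.

Lemma kmlc_imp_trans A B C : KMLC (Imp A B) -> KMLC (Imp B C) -> KMLC (Imp A C).
Proof.
  intros HAB HBC.
  pose proof (kmlc_mp _ _ (kmlc_ipc _ (ax_K _ A)) HBC) as HBC'.
  exact (kmlc_mp _ _ (kmlc_mp _ _ (kmlc_ipc _ (ax_S A B C)) HBC') HAB).
Qed.

Lemma kmlc_box_mono A B : KMLC (Imp A B) -> KMLC (Imp (Box A) (Box B)).
Proof. intros H. exact (kmlc_mp _ _ (kmlc_K A B) (kmlc_nec _ H)). Qed.

(* [imp_chain [g1; ...; gn] X] is [gn -> ... -> g1 -> X]. *)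
Fixpoint imp_chain (G : list form) (X : form) : form :=
  match G with
  | [] => X
  | g :: G' => imp_chain G' (Imp g X)
  end.

Lemma kmlc_imp_chain G X : KMLC X -> KMLC (imp_chain G X).
Proof.
  revert X; induction G as [|g G IH]; intros X HX; simpl; [exact HX|].
  apply IH. exact (kmlc_mp _ _ (kmlc_ipc _ (ax_K X g)) HX).
Qed.

Lemma kmlc_imp_chain_map G X Y :
  KMLC (Imp X Y) -> KMLC (Imp (imp_chain G X) (imp_chain G Y)).
Proof.
  revert X Y; induction G as [|g G IH]; intros X Y H; simpl; [exact H|].
  apply IH.
  exact (kmlc_mp _ _ (kmlc_ipc _ (ax_S g X Y)) (kmlc_mp _ _ (kmlc_ipc _ (ax_K _ g)) H)).
Qed.

Lemma kmlc_imp_chain_map2 G X Y Z : KMLC (Imp X (Imp Y Z)) ->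
  KMLC (Imp (imp_chain G X) (Imp (imp_chain G Y) (imp_chain G Z))).
Proof.
  revert X Y Z; induction G as [|g G IH]; intros X Y Z H; simpl; [exact H|].
  apply IH.
  pose proof (kmlc_mp _ _ (kmlc_ipc _ (ax_K _ g)) H) as Hg.
  exact (kmlc_imp_trans _ _ _ (kmlc_mp _ _ (kmlc_ipc _ (ax_S g X (Imp Y Z))) Hg)
           (kmlc_ipc _ (ax_S g Y Z))).
Qed.

Inductive derives : list form -> form -> Prop :=
| der_hyp G A : In A G -> derives G A
| der_thm G A : KMLC A -> derives G A
| der_impI G A B : derives (A :: G) B -> derives G (Imp A B)
| der_impE G A B : derives G (Imp A B) -> derives G A -> derives G B.

Notation "G ⊢ A" := (derives G A) (at level 70).

Arguments der_impI {G A B}.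
Arguments der_impE {G A B}.

Lemma derives_sound G A : G ⊢ A -> KMLC (imp_chain G A).
Proof.
  induction 1 as [G A HA|G A HA|G A B _ IH|G A B _ IH1 _ IH2].
  - induction G as [|g G IHG]; [contradiction|]. simpl.
    destruct HA as [<-|HA].
    + apply kmlc_imp_chain, kmlc_imp_refl.
    + exact (kmlc_mp _ _ (kmlc_imp_chain_map G _ _ (kmlc_ipc _ (ax_K A g))) (IHG HA)).
  - apply kmlc_imp_chain, HA.
  - exact IH.
  - pose proof (kmlc_imp_chain_map2 G (Imp A B) A B (kmlc_imp_refl _)) as H.
    exact (kmlc_mp _ _ (kmlc_mp _ _ H IH1) IH2).
Qed.

Lemma derives_weaken G G' A : G ⊢ A -> incl G G' -> G' ⊢ A.
Proof.
  intros H; revert G'; induction H as [G A HA|G A HA|G A B _ IH|G A B _ IH1 _ IH2];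
    intros G' Hincl.
  - apply der_hyp, Hincl, HA.
  - apply der_thm, HA.
  - apply der_impI, IH, incl_cons; [left; reflexivity|].
    intros x Hx; right; apply Hincl, Hx.
  - exact (der_impE (IH1 _ Hincl) (IH2 _ Hincl)).
Qed.

Lemma der_lift {G A B} : G ⊢ A -> B :: G ⊢ A.
Proof. intros H; apply (derives_weaken G); [exact H|]. intros x Hx; right; exact Hx. Qed.

Lemma der_hyp0 {G A} : A :: G ⊢ A.
Proof. apply der_hyp; left; reflexivity. Qed.

Lemma der_ax G A : ipc_axiom A -> G ⊢ A.
Proof. intros H; apply der_thm, kmlc_ipc, H. Qed.

Lemma der_andI G A B : G ⊢ A -> G ⊢ B -> G ⊢ And A B.
Proof. intros HA HB. exact (der_impE (der_impE (der_ax G _ (ax_andI A B)) HA) HB). Qed.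

Lemma der_andE2 G A B : G ⊢ And A B -> G ⊢ B.
Proof. exact (der_impE (der_ax G _ (ax_andE2 A B))). Qed.

Lemma der_orE G A B C : G ⊢ Or A B -> A :: G ⊢ C -> B :: G ⊢ C -> G ⊢ C.
Proof.
  intros H HA HB.
  exact (der_impE (der_impE (der_impE (der_ax G _ (ax_orE A B C))
           (der_impI HA)) (der_impI HB)) H).
Qed.

(* Löb's axiom for [a /\ Box a]: under [a], [Box (a /\ Box a)] yields [a /\ Box a]. *)
Lemma kmlc_imp_box a : KMLC (Imp a (Box a)).
Proof.
  set (X := And a (Box a)).
  apply (derives_sound []), der_impI, (der_andE2 _ a).
  apply (der_impE (der_thm _ _ (kmlc_Lob X))), der_impI, der_andI.
  - apply der_lift, der_hyp0.
  - apply (der_impE (A := Box X)); [|apply der_hyp0].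
    apply der_thm, kmlc_box_mono, kmlc_ipc, ax_andE1.
Qed.

Lemma derives_box G A : G ⊢ A -> G ⊢ Box A.
Proof. apply der_impE, der_thm, kmlc_imp_box. Qed.

Lemma derives_LC_cases G A x y : Imp x y :: G ⊢ A -> Imp y x :: G ⊢ A -> G ⊢ A.
Proof. apply der_orE, der_thm, kmlc_LC. Qed.

Definition entails G x y : Prop := G ⊢ Imp x y.

Lemma entails_refl G x : entails G x x.
Proof. apply der_impI, der_hyp0. Qed.

Lemma entails_trans G x y z : entails G x y -> entails G y z -> entails G x z.
Proof.
  intros Hxy Hyz. apply der_impI.
  exact (der_impE (der_lift Hyz) (der_impE (der_lift Hxy) der_hyp0)).
Qed.

Lemma entails_of_kmlc G x y : KMLC (Imp x y) -> entails G x y.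
Proof. apply der_thm. Qed.

Lemma entails_of_derives G x y : G ⊢ y -> entails G x y.
Proof. intros H; apply der_impI, der_lift, H. Qed.

Lemma derives_entails G x y : G ⊢ x -> entails G x y -> G ⊢ y.
Proof. intros Hx Hxy; exact (der_impE Hxy Hx). Qed.

Lemma entails_andI G x y z : entails G z x -> entails G z y -> entails G z (And x y).
Proof.
  intros Hx Hy. apply der_impI, der_andI.
  - exact (der_impE (der_lift Hx) der_hyp0).
  - exact (der_impE (der_lift Hy) der_hyp0).
Qed.

Lemma entails_orE G x y z : entails G x z -> entails G y z -> entails G (Or x y) z.
Proof.
  intros Hx Hy. apply der_impI. apply (der_orE _ x y); [apply der_hyp0| |].
  - exact (der_impE (der_lift (der_lift Hx)) der_hyp0).
  - exact (der_impE (der_lift (der_lift Hy)) der_hyp0).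
Qed.

Lemma entails_contract G x y : entails G x (Imp x y) -> entails G x y.
Proof.
  intros H. apply der_impI.
  exact (der_impE (der_impE (der_lift H) der_hyp0) der_hyp0).
Qed.

Lemma entails_imp_elim G x y : entails G (Imp x y) x -> entails G (Imp x y) y.
Proof.
  intros H. apply der_impI.
  exact (der_impE der_hyp0 (der_impE (der_lift H) der_hyp0)).
Qed.

Lemma entails_box_of_imp G x y : entails G (Imp x y) x -> entails G (Box y) x.
Proof.
  intros H. apply (entails_trans _ _ (Or (Imp x y) x)).
  - apply entails_of_kmlc, kmlc_KM.
  - exact (entails_orE _ _ _ _ H (entails_refl _ _)).
Qed.

Lemma derives_lob G x : entails G (Box x) x -> G ⊢ x.
Proof. apply der_impE, der_thm, kmlc_Lob. Qed.

(** * Soundness *)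

Lemma forces_mono V : upset_val V ->
  forall A w x, x <= w -> forces V w A -> forces V x A.
Proof.
  intros HV A; induction A as [p| |B _ C _|B IHB C IHC|B IHB C IHC|B _];
    simpl; intros w x Hxw H.
  - exact (HV p w x Hxw H).
  - exact H.
  - intros y Hy. apply H. lia.
  - destruct H as [HB HC]. split; eauto.
  - destruct H as [HB|HC]; [left|right]; eauto.
  - intros y Hy. apply H. lia.
Qed.

Lemma forces_subst s A : forall V w,
  forces V w (subst s A) <-> forces (fun p x => forces V x (s p)) w A.
Proof.
  induction A as [p| |B IHB C IHC|B IHB C IHC|B IHB C IHC|B IHB]; simpl; intros V w.
  - reflexivity.
  - reflexivity.
  - split; intros H x Hx HB; apply IHC, H, IHB; assumption.
  - rewrite IHB, IHC. reflexivity.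
  - rewrite IHB, IHC. reflexivity.
  - split; intros H x Hx; apply IHB, H, Hx.
Qed.

Lemma ipc_axiom_valid A : ipc_axiom A -> omega_valid A.
Proof.
  intros HA V HV w. destruct HA; simpl.
  - intros x _ HA y Hy _. exact (forces_mono V HV _ x y Hy HA).
  - intros x _ H1 y Hy H2 z Hz H3.
    exact (H1 z ltac:(lia) H3 z (le_n _) (H2 z ltac:(lia) H3)).
  - intros x _ [H _]; exact H.
  - intros x _ [_ H]; exact H.
  - intros x _ H1 y Hy H2. split; [exact (forces_mono V HV _ x y Hy H1)|exact H2].
  - intros x _ H; left; exact H.
  - intros x _ H; right; exact H.
  - intros x _ H1 y Hy H2 z Hz [H3|H3]; [apply H1|apply H2]; (lia || exact H3).
  - intros x _ [].
Qed.

Lemma box_K_valid A B : omega_valid (Imp (Box (Imp A B)) (Imp (Box A) (Box B))).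
Proof.
  intros V HV w x _ H1 y Hy H2 z Hz.
  exact (H1 z ltac:(lia) z (le_n _) (H2 z ltac:(lia))).
Qed.

Lemma lob_valid A : omega_valid (Imp (Imp (Box A) A) A).
Proof.
  intros V HV w x _ H. clear w.
  enough (Hall : forall n, n <= x -> forces V n A) by exact (Hall x (le_n _)).
  induction n as [n IH] using lt_wf_ind; intros Hn.
  apply (H n Hn). intros m Hm. apply IH; lia.
Qed.

Lemma km_valid A B : omega_valid (Imp (Box A) (Or (Imp B A) B)).
Proof.
  intros V HV w x _ H. simpl.
  destruct (classic (forces V x B)) as [HB|HB]; [right; exact HB|left].
  intros y Hy HBy. apply H.
  destruct (Nat.eq_dec y x) as [->|]; [contradiction|lia].
Qed.

Lemma lc_valid A B : omega_valid (Or (Imp A B) (Imp B A)).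
Proof.
  intros V HV w. simpl.
  destruct (classic (exists x, x <= w /\ forces V x A /\ ~ forces V x B))
    as [(x & Hx & HA & HnB)|Hn].
  - right. intros y Hy HB.
    destruct (le_lt_dec x y) as [Hxy|Hyx].
    + exfalso. exact (HnB (forces_mono V HV _ y x Hxy HB)).
    + exact (forces_mono V HV _ x y ltac:(lia) HA).
  - left. intros x Hx HA. apply NNPP. intros HnB. apply Hn. eauto.
Qed.

Lemma soundness A : KMLC A -> omega_valid A.
Proof.
  induction 1 as [A HA| | | | |A B _ IH1 _ IH2|A _ IH|s A _ IH].
  - apply ipc_axiom_valid, HA.
  - apply box_K_valid.
  - apply lob_valid.
  - apply km_valid.
  - apply lc_valid.
  - intros V HV w. exact (IH1 V HV w w (le_n _) (IH2 V HV w)).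
  - intros V HV w x _. apply IH, HV.
  - intros V HV w. apply forces_subst, IH.
    intros p x y Hyx Hp. exact (forces_mono V HV _ x y Hyx Hp).
Qed.

(** * Lindenbaum extension *)

Lemma lindenbaum_pairs A (P : list (form * form)) : forall G, ~ G ⊢ A ->
  exists G', ~ G' ⊢ A /\ incl G G' /\
    forall x y, In (x, y) P -> entails G' x y \/ entails G' y x.
Proof.
  induction P as [|[x y] P IH]; intros G HG.
  - exists G. split; [exact HG|split; [apply incl_refl|intros ? ? []]].
  - assert (step : forall h, h = Imp x y \/ h = Imp y x -> ~ h :: G ⊢ A ->
      exists G', ~ G' ⊢ A /\ incl G G' /\
        forall a b, In (a, b) ((x, y) :: P) -> entails G' a b \/ entails G' b a).
    { intros h Hh Hn. destruct (IH _ Hn) as (G' & HG' & Hincl & Htot).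
      apply incl_cons_inv in Hincl as [Hh' Hincl].
      exists G'. split; [exact HG'|split; [exact Hincl|]].
      intros a b [E|Hab]; [|exact (Htot a b Hab)].
      injection E as <- <-.
      destruct Hh as [->| ->]; [left|right]; apply der_hyp, Hh'. }
    destruct (classic (Imp x y :: G ⊢ A)) as [Hxy|Hxy]; [|exact (step _ (or_introl eq_refl) Hxy)].
    destruct (classic (Imp y x :: G ⊢ A)) as [Hyx|Hyx]; [|exact (step _ (or_intror eq_refl) Hyx)].
    exfalso. exact (HG (derives_LC_cases _ _ _ _ Hxy Hyx)).
Qed.

Lemma lindenbaum_total A D : ~ [] ⊢ A ->
  exists G, ~ G ⊢ A /\
    (forall x y, In x D -> In y D -> entails G x y \/ entails G y x) /\
    (forall x y, In x D -> In y D -> entails G (Imp x y) x \/ entails G x (Imp x y)).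
Proof.
  intros HA.
  set (imp_pair := fun p : form * form => (Imp (fst p) (snd p), fst p)).
  destruct (lindenbaum_pairs A (list_prod D D ++ map imp_pair (list_prod D D)) [] HA)
    as (G & HG & _ & Htot).
  exists G. split; [exact HG|split]; intros x y Hx Hy; apply Htot, in_or_app.
  - left. apply in_prod; assumption.
  - right. apply (in_map imp_pair _ (x, y)), in_prod; assumption.
Qed.

(** * Ranks in a finite total preorder *)

Definition dec (P : Prop) : bool := if excluded_middle_informative P then true else false.

Lemma decP P : reflect P (dec P).
Proof. unfold dec. destruct (excluded_middle_informative P); constructor; assumption. Qed.

Definition countP {T} (P : T -> Prop) (l : list T) : nat :=
  length (filter (fun x => dec (P x)) l).

Section Counting.

Context {T : Type}.

Lemma countP_le (P Q : T -> Prop) l :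
  (forall x, In x l -> P x -> Q x) -> countP P l <= countP Q l.
Proof.
  unfold countP; induction l as [|a l IH]; simpl; intros H; [lia|].
  pose proof (IH (fun x Hx => H x (or_intror Hx))).
  destruct (decP (P a)) as [Pa|]; destruct (decP (Q a)) as [|nQa]; simpl; try lia.
  exfalso. exact (nQa (H a (or_introl eq_refl) Pa)).
Qed.

Lemma countP_lt (P Q : T -> Prop) l x :
  (forall y, In y l -> P y -> Q y) -> In x l -> Q x -> ~ P x -> countP P l < countP Q l.
Proof.
  intros H; induction l as [|a l IH]; simpl; intros Hx Qx nPx; [contradiction|].
  pose proof (countP_le P Q l (fun y Hy => H y (or_intror Hy))) as Hle.
  pose proof (H a (or_introl eq_refl)) as Ha.
  unfold countP in *; simpl.
  destruct Hx as [->|Hx].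
  - destruct (decP (P x)); [contradiction|]. destruct (decP (Q x)); [simpl; lia|contradiction].
  - pose proof (IH (fun y Hy => H y (or_intror Hy)) Hx Qx nPx).
    destruct (decP (P a)) as [Pa|]; destruct (decP (Q a)) as [|nQa]; simpl; try lia.
    exfalso. exact (nQa (Ha Pa)).
Qed.

Lemma countP_ext (P Q : T -> Prop) l :
  (forall x, In x l -> P x <-> Q x) -> countP P l = countP Q l.
Proof.
  intros H. apply Nat.le_antisymm; apply countP_le; intros x Hx; apply H, Hx.
Qed.

Lemma countP_zero (P : T -> Prop) l : (forall x, In x l -> ~ P x) -> countP P l = 0.
Proof.
  unfold countP; induction l as [|a l IH]; simpl; intros H; [reflexivity|].
  destruct (decP (P a)) as [Pa|]; [exfalso; exact (H a (or_introl eq_refl) Pa)|].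
  apply IH. intros x Hx. apply H. right. exact Hx.
Qed.

Lemma countP_pos (P : T -> Prop) l x : In x l -> P x -> 0 < countP P l.
Proof.
  intros Hx Px. rewrite <- (countP_zero (fun _ => False) l (fun _ _ H => H)).
  exact (countP_lt _ _ l x (fun _ _ H => False_ind _ H) Hx Px (fun H => H)).
Qed.

Lemma countP_or (P Q : T -> Prop) l : (forall x, In x l -> ~ (P x /\ Q x)) ->
  countP (fun x => P x \/ Q x) l = countP P l + countP Q l.
Proof.
  unfold countP; induction l as [|a l IH]; simpl; intros H; [reflexivity|].
  pose proof (IH (fun x Hx => H x (or_intror Hx))) as IH'.
  pose proof (H a (or_introl eq_refl)) as Ha.
  destruct (decP (P a \/ Q a)) as [PQa|nPQa]; destruct (decP (P a)) as [Pa|nPa];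
    destruct (decP (Q a)) as [Qa|nQa]; simpl; try lia; tauto.
Qed.

End Counting.

Section Rank.

Context {T : Type} (R : T -> T -> Prop).
Hypothesis R_refl : forall x, R x x.
Hypothesis R_trans : forall x y z, R x y -> R y z -> R x z.

Let equivalent x y := R x y /\ R y x.

Fixpoint class_reps (l : list T) : list T :=
  match l with
  | [] => []
  | x :: l' =>
      if dec (exists y, In y (class_reps l') /\ equivalent x y)
      then class_reps l' else x :: class_reps l'
  end.

Lemma class_reps_incl l : incl (class_reps l) l.
Proof.
  induction l as [|x l IH]; simpl; [apply incl_refl|].
  destruct (dec _); [|apply incl_cons; [left; reflexivity|]];
    intros y Hy; right; apply IH, Hy.
Qed.

Lemma class_reps_cover l x : In x l -> exists y, In y (class_reps l) /\ equivalent x y.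
Proof.
  induction l as [|a l IH]; simpl; [contradiction|]. intros Hx.
  destruct (decP (exists y, In y (class_reps l) /\ equivalent a y)) as [Ha|Ha].
  - destruct Hx as [->|Hx]; [exact Ha|exact (IH Hx)].
  - destruct Hx as [->|Hx].
    + exists x. split; [left; reflexivity|split; apply R_refl].
    + destruct (IH Hx) as (y & Hy & Hxy). exists y. split; [right; exact Hy|exact Hxy].
Qed.

Lemma class_reps_unique l x : countP (fun y => equivalent y x) (class_reps l) <= 1.
Proof.
  induction l as [|a l IH]; simpl; [unfold countP; simpl; lia|].
  destruct (decP (exists y, In y (class_reps l) /\ equivalent a y)) as [|Ha]; [exact IH|].
  unfold countP in *; simpl.
  destruct (decP (equivalent a x)) as [[Hax Hxa]|]; [|exact IH].
  simpl. apply le_n_S, Nat.eq_le_incl, (countP_zero (fun y => equivalent y x)).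
  intros y Hy [Hyx Hxy]. apply Ha. exists y.
  split; [exact Hy|split; eauto].
Qed.

Variable D : list T.

(* When [R] is total on [D], [~ R s t] says that [t] lies strictly below [s]. *)
Definition rank (s : T) : nat := countP (fun t => ~ R s t) (class_reps D).

Lemma rank_le s t : R s t -> rank s <= rank t.
Proof. intros Hst. apply countP_le. intros u _ Hsu Htu. eauto. Qed.

Lemma rank_lt s t : In t D -> R t s -> ~ R s t -> rank t < rank s.
Proof.
  intros Ht Hts Hst.
  destruct (class_reps_cover D t Ht) as (y & Hy & Hty & Hyt).
  apply (countP_lt _ _ _ y); [intros u _ Htu Hsu; eauto|exact Hy| |].
  - intros Hsy. eauto.
  - intros H. exact (H Hty).
Qed.

Lemma rank_bottom b : (forall u, R b u) -> rank b = 0.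
Proof. intros Hb. apply countP_zero. intros u _ H. exact (H (Hb u)). Qed.

Lemma rank_succ c b :
  (forall x y, In x D -> In y D -> R x y \/ R y x) -> In b D ->
  (forall u, In u D -> ~ R c u <-> R u b) -> rank c = S (rank b).
Proof.
  intros Htot Hb Hcover.
  pose proof (class_reps_incl D) as Hincl.
  transitivity (countP (fun u => ~ R b u \/ equivalent u b) (class_reps D)).
  - apply countP_ext. intros u Hu. rewrite (Hcover u (Hincl u Hu)).
    destruct (classic (R b u)); [split; [right; split|intros [|[]]]; tauto|].
    destruct (Htot u b (Hincl u Hu) Hb); tauto.
  - rewrite countP_or by (intros u _ [H [_ H']]; exact (H H')).
    enough (countP (fun u => equivalent u b) (class_reps D) = 1) by (unfold rank; lia).
    destruct (class_reps_cover D b Hb) as (y & Hy & Hby & Hyb).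
    pose proof (countP_pos (fun u => equivalent u b) _ y Hy (conj Hyb Hby)).
    pose proof (class_reps_unique D b). lia.
Qed.

End Rank.

(** * The countermodel *)

Fixpoint subformulas (A : form) : list form :=
  A :: match A with
       | Imp B C | And B C | Or B C => subformulas B ++ subformulas C
       | Box B => subformulas B
       | _ => []
       end.

Definition subformula_closed (D : list form) : Prop :=
  forall B, In B D -> incl (subformulas B) D.

Lemma subformulas_refl A : In A (subformulas A).
Proof. destruct A; left; reflexivity. Qed.

Lemma subformulas_closed A : subformula_closed (subformulas A).
Proof.
  induction A as [p| |B IHB C IHC|B IHB C IHC|B IHB C IHC|B IHB];
    intros X [<-|HX] Y HY; try exact HY; simpl in HX |- *; try contradiction; right.
  1-3: apply in_app_iff in HX as [HX|HX]; apply in_app_iff;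
    [left; exact (IHB X HX Y HY)|right; exact (IHC X HX Y HY)].
  exact (IHB X HX Y HY).
Qed.

Section Countermodel.

Variables G D : list form.
Hypothesis D_closed : subformula_closed D.
Hypothesis G_total : forall x y, In x D -> In y D -> entails G x y \/ entails G y x.
Hypothesis G_total_imp :
  forall x y, In x D -> In y D -> entails G (Imp x y) x \/ entails G x (Imp x y).

Let rk := rank (entails G) D.
Let top := rk (Imp Bot Bot).

Lemma rk_le x y : entails G x y -> rk x <= rk y.
Proof. apply rank_le, entails_trans. Qed.

Lemma rk_eq x y : entails G x y -> entails G y x -> rk x = rk y.
Proof. intros Hxy Hyx. apply Nat.le_antisymm; apply rk_le; assumption. Qed.

Lemma rk_lt x y : In y D -> entails G y x -> ~ entails G x y -> rk y < rk x.
Proof. apply rank_lt; [apply entails_refl|apply entails_trans]. Qed.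

Lemma entails_top x : entails G x (Imp Bot Bot).
Proof. apply entails_of_derives, der_thm, kmlc_imp_refl. Qed.

Lemma rk_provable s : G ⊢ s -> rk s = top.
Proof. intros Hs. apply rk_eq; [apply entails_top|apply entails_of_derives, Hs]. Qed.

Lemma rk_le_top s : rk s <= top.
Proof. apply rk_le, entails_top. Qed.

Lemma rk_lt_top s : In s D -> ~ G ⊢ s -> rk s < top.
Proof.
  intros Hs Hns. apply rk_lt; [exact Hs|apply entails_top|].
  intros H. exact (Hns (derives_entails _ _ _ (der_thm _ _ (kmlc_imp_refl Bot)) H)).
Qed.

Lemma rk_bot : rk Bot = 0.
Proof. apply rank_bottom. intros u. apply entails_of_kmlc, kmlc_ipc, ax_efq. Qed.

Lemma rk_and x y : In x D -> In y D -> rk (And x y) = Nat.min (rk x) (rk y).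
Proof.
  intros Hx Hy. destruct (G_total x y Hx Hy) as [H|H]; pose proof (rk_le _ _ H) as Hle.
  - rewrite (rk_eq (And x y) x); [lia|apply entails_of_kmlc, kmlc_ipc, ax_andE1|].
    exact (entails_andI _ _ _ _ (entails_refl G x) H).
  - rewrite (rk_eq (And x y) y); [lia|apply entails_of_kmlc, kmlc_ipc, ax_andE2|].
    exact (entails_andI _ _ _ _ H (entails_refl G y)).
Qed.

Lemma rk_or x y : In x D -> In y D -> rk (Or x y) = Nat.max (rk x) (rk y).
Proof.
  intros Hx Hy. destruct (G_total x y Hx Hy) as [H|H]; pose proof (rk_le _ _ H) as Hle.
  - rewrite (rk_eq (Or x y) y); [lia| |apply entails_of_kmlc, kmlc_ipc, ax_orI2].
    exact (entails_orE _ _ _ _ H (entails_refl G y)).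
  - rewrite (rk_eq (Or x y) x); [lia| |apply entails_of_kmlc, kmlc_ipc, ax_orI1].
    exact (entails_orE _ _ _ _ (entails_refl G x) H).
Qed.

Lemma rk_imp x y : In x D -> In y D -> ~ entails G x y ->
  rk (Imp x y) = rk y /\ rk y < rk x.
Proof.
  intros Hx Hy Hxy. split.
  - apply rk_eq; [|apply entails_of_kmlc, kmlc_ipc, ax_K].
    destruct (G_total_imp x y Hx Hy) as [H|H].
    + exact (entails_imp_elim _ _ _ H).
    + exfalso. exact (Hxy (entails_contract _ _ _ H)).
  - apply rk_lt; [exact Hy| |exact Hxy].
    destruct (G_total x y Hx Hy); [contradiction|assumption].
Qed.

Lemma rk_box b : In b D -> ~ G ⊢ b -> rk (Box b) = S (rk b).
Proof.
  intros Hb Hnb. apply rank_succ; [apply entails_refl|apply entails_trans|exact G_total|exact Hb|].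
  intros u Hu. split.
  - intros Hbu. apply NNPP. intros Hub.
    destruct (G_total_imp u b Hu Hb) as [H|H].
    + exact (Hbu (entails_box_of_imp _ _ _ H)).
    + exact (Hub (entails_contract _ _ _ H)).
  - intros Hub Hbu. exact (Hnb (derives_lob _ _ (entails_trans _ _ _ _ Hbu Hub))).
Qed.

Let V p w := w < rk (Var p).

Let rk_correct B := forall w, w < top -> (forces V w B <-> w < rk B).

Lemma truth_and B1 B2 : In B1 D -> In B2 D ->
  rk_correct B1 -> rk_correct B2 -> rk_correct (And B1 B2).
Proof.
  intros H1 H2 IH1 IH2 w Hw. simpl.
  rewrite (IH1 w Hw), (IH2 w Hw), (rk_and B1 B2 H1 H2). lia.
Qed.

Lemma truth_or B1 B2 : In B1 D -> In B2 D ->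
  rk_correct B1 -> rk_correct B2 -> rk_correct (Or B1 B2).
Proof.
  intros H1 H2 IH1 IH2 w Hw. simpl.
  rewrite (IH1 w Hw), (IH2 w Hw), (rk_or B1 B2 H1 H2). lia.
Qed.

Lemma truth_imp B1 B2 : In B1 D -> In B2 D ->
  rk_correct B1 -> rk_correct B2 -> rk_correct (Imp B1 B2).
Proof.
  intros H1 H2 IH1 IH2 w Hw. simpl. pose proof (rk_le_top B1) as Htop1.
  destruct (classic (entails G B1 B2)) as [H|H].
  - rewrite (rk_provable _ H). split; [lia|]. intros _ x Hx HB1.
    pose proof (rk_le _ _ H). apply (IH1 x) in HB1; [|lia].
    apply IH2; lia.
  - destruct (rk_imp B1 B2 H1 H2 H) as [-> Hlt]. split.
    + intros Hf. destruct (Nat.lt_ge_cases w (rk B2)) as [|Hge]; [assumption|].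
      assert (HB2 : forces V (rk B2) B2) by (apply Hf; [exact Hge|apply IH1; lia]).
      apply IH2 in HB2; lia.
    + intros Hw2 x Hx _. apply IH2; lia.
Qed.

Lemma truth_box B : In B D -> rk_correct B -> rk_correct (Box B).
Proof.
  intros HB IH w Hw. simpl.
  destruct (classic (G ⊢ B)) as [H|H].
  - rewrite (rk_provable _ (derives_box _ _ H)). split; [lia|]. intros _ x Hx.
    apply IH; [lia|]. rewrite (rk_provable _ H). lia.
  - rewrite (rk_box B HB H). pose proof (rk_lt_top B HB H). split.
    + intros Hf. destruct (Nat.lt_ge_cases (rk B) w) as [Hlt|]; [|lia].
      apply (IH (rk B)) in Hf; lia.
    + intros Hw2 x Hx. apply IH; lia.
Qed.

Lemma truth B : In B D -> rk_correct B.
Proof.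
  induction B as [p| |B1 IH1 B2 IH2|B1 IH1 B2 IH2|B1 IH1 B2 IH2|B IH]; intros HB;
    [intros w _; reflexivity|intros w _; simpl; rewrite rk_bot; lia| | | |].
  1-3:
    assert (H1 : In B1 D) by (apply (D_closed _ HB); simpl; auto using in_or_app, subformulas_refl);
    assert (H2 : In B2 D) by (apply (D_closed _ HB); simpl; auto using in_or_app, subformulas_refl).
  - exact (truth_imp B1 B2 H1 H2 (IH1 H1) (IH2 H2)).
  - exact (truth_and B1 B2 H1 H2 (IH1 H1) (IH2 H2)).
  - exact (truth_or B1 B2 H1 H2 (IH1 H1) (IH2 H2)).
  - assert (H1 : In B D) by (apply (D_closed _ HB); simpl; auto using subformulas_refl).
    exact (truth_box B H1 (IH H1)).
Qed.

Lemma countermodel A : In A D -> ~ G ⊢ A -> ~ omega_valid A.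
Proof.
  intros HA HnA Hvalid.
  pose proof (rk_lt_top A HA HnA).
  assert (HV : upset_val V) by (intros p w x Hx Hp; unfold V in *; lia).
  pose proof (Hvalid V HV (rk A)) as HrkA.
  apply truth in HrkA; [lia|exact HA|assumption].
Qed.

End Countermodel.

Lemma completeness A : omega_valid A -> KMLC A.
Proof.
  intros Hvalid. apply NNPP. intros HnA.
  destruct (lindenbaum_total A (subformulas A)) as (G & HG & Htot & Htot_imp).
  { intros H. exact (HnA (derives_sound [] A H)). }
  exact (countermodel G _ (subformulas_closed A) Htot Htot_imp A (subformulas_refl A) HG Hvalid).
Qed.

Theorem theorem5p16 : forall A : form, KMLC A <-> omega_valid A.
Proof.
  intros A. split; [apply soundness|apply completeness].
Qed.
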